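(* Let $\Gamma$ be a finite graph on $n$ vertices such that $\operatorname{Aut}(\Gamma)$ acts transitively and imprimitively on $V(\Gamma)$. If $\operatorname{Aut}(\Gamma)$ has a factorizing block system, then $\Gamma$ is uniformly vertex-transitive.
   Context: A permutation of a finite set $X$ with $|X|=n$ is identified with its $n\times n$ permutation matrix (the $(u,v)$ entry is $1$ iff $\sigma(u)=v$); $J_n$ is the all-ones matrix. A group $G$ acting on $X$ is uniformly transitive if there are $n$ distinct elements $\sigma_1,\ldots,\sigma_n\in G$ whose permutation matrices satisfy $\sum_i\sigma_i=J_n$; $\Gamma$ is uniformly vertex-transitive if $\operatorname{Aut}(\Gamma)$ is uniformly transitive on $V(\Gamma)$. For $G$ transitive on $X$, a block is $B\subset X$ with $gB=B$ or $gB\cap B=\emptyset$ for all $g\in G$; it is nontrivial if $1<|B|<|X|$; $G$ is imprimitive if a nontrivial block exists. A block system is $\mathcal B=\{gB:g\in G\}$ for a block $B$; it partitions $X$ into blocks of equal size. The fixer $\mathrm{fix}_\Gamma(\mathcal B)$ is the subgroup of $\operatorname{Aut}(\Gamma)$ of automorphisms mapping each block of $\mathcal B$ to itself; the quotient $\operatorname{Aut}(\Gamma)/\mathrm{fix}_\Gamma(\mathcal B)$ acts faithfully and transitively on $\mathcal B$. A nontrivial block system $\mathcal B$ for $\operatorname{Aut}(\Gamma)$, consisting of $m$ blocks of size $k$, is factorizing if (i) $\mathrm{fix}_\Gamma(\mathcal B)$ contains $k$ distinct elements whose permutation matrices (on $V(\Gamma)$) are pairwise orthogonal for the Schur (entrywise)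 product, i.e. pairwise have zero entrywise product, and (ii) $\operatorname{Aut}(\Gamma)/\mathrm{fix}_\Gamma(\mathcal B)$ acts uniformly transitively on $\mathcal B$. *)

From HB Require Import structures.
From mathcomp Require Import all_boot all_order all_fingroup.
Set Implicit Arguments. Unset Strict Implicit. Unset Printing Implicit Defensive.
Local Open Scope group_scope.

Section Defs.
Variable V : finType.

Definition graphAut (e : rel V) : {set {perm V}} :=
  [set s : {perm V} | [forall x, [forall y, e (s x) (s y) == e x y]]].

Definition pimg (s : {perm V}) (B : {set V}) : {set V} := [set s x | x in B].

Definition transitive_on (G : {set {perm V}}) : Prop :=
  forall x y : V, exists2 g, g \in G & g x = y.

Definition is_block (G : {set {perm V}}) (B : {set V}) : bool :=
  [forall g in G, (pimg g B == B) || [disjoint pimg g B & B]].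

Definition nontrivial (B : {set V}) : bool := (1 < #|B|) && (#|B| < #|V|).

Definition imprimitive (G : {set {perm V}}) : Prop :=
  exists B : {set V}, is_block G B && nontrivial B.

Definition block_system (G : {set {perm V}}) (B : {set V}) : {set {set V}} :=
  [set pimg g B | g in G].

(* Entry (u,v) of the permutation matrix of s is (s u == v).
   Uniformly transitive: n = #|V| distinct elements whose matrices sum to J_n. *)
Definition uniformly_transitive (G : {set {perm V}}) : Prop :=
  exists sigma : 'I_#|V| -> {perm V},
    [/\ injective sigma, (forall i, sigma i \in G) &
        forall u v : V, (\sum_(i < #|V|) (sigma i u == v)) = 1]%N.

Definition uniformly_vertex_transitive (e : rel V) : Prop :=
  uniformly_transitive (graphAut e).

Definition fixer (G : {set {perm V}}) (P : {set {set V}}) : {set {perm V}} :=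
  [set g in G | [forall C in P, pimg g C == C]].

Definition schur_orth (s t : {perm V}) : Prop :=
  forall u v : V, ((s u == v) * (t u == v) = 0)%N.

(* The block system generated by B (blocks of size k = #|B|, m = #|P| blocks)
   is nontrivial and factorizing.
   (ii) The quotient Aut/fix acts on P by (g fix) C = g C; its elements are
   cosets g fix with g in Aut.  We take m representatives g_i in Aut lying in
   pairwise distinct cosets, whose permutation matrices on P (entry (C,D) is
   (g_i C == D)) sum to J_m. *)
Definition factorizing (e : rel V) (B : {set V}) : Prop :=
  let G := graphAut e in
  let P := block_system G B in
  [/\ is_block G B, nontrivial B,
      (exists tau : 'I_#|B| -> {perm V},
         [/\ injective tau, (forall i, tau i \in fixer G P) &
             forall i j, i != j -> schur_orth (tau i) (tau j)]) &
      (exists g : 'I_#|P| -> {perm V},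
         [/\ (forall i, g i \in G),
             (forall i j, i != j -> (g i)^-1 * g j \notin fixer G P) &
             forall C D, C \in P -> D \in P ->
               (\sum_(i < #|P|) (pimg (g i) C == D))%N = 1%N])].

End Defs.

(* Write sigma_(i,j) for "apply tau_j, then g_i", where the tau_j are the k
   Schur-orthogonal elements of the fixer and the g_i lift a uniformly
   transitive family on the m blocks.  For a vertex u in the block C, the
   points tau_j u are pairwise distinct and stay in C, so they enumerate C.
   Hence sigma_(i,j) u = v exactly when g_i C is the block D of v and
   tau_j u = g_i^-1 v, which happens for exactly one pair (i, j); the n = m k
   permutations sigma_(i,j) thus have matrices summing to J_n. *)

From mathcomp Require Import all_boot all_order all_fingroup.
Set Implicit Arguments. Unset Strict Implicit. Unset Printing Implicit Defensive.

Local Open Scope group_scope.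

Section Permutations.
Variable V : finType.

Lemma graphAut_group_set (e : rel V) : group_set (graphAut e).
Proof.
apply/group_setP; split=> [|s t].
  by rewrite inE; apply/forallP => x; apply/forallP => y; rewrite !perm1.
rewrite !inE => /forallP Hs /forallP Ht; apply/forallP => x; apply/forallP => y.
by rewrite !permM (eqP (forallP (Ht _) _)) (eqP (forallP (Hs _) _)).
Qed.

Canonical graphAut_group (e : rel V) := group (graphAut_group_set e).

Lemma pimgM (s t : {perm V}) X : pimg s (pimg t X) = pimg (t * s) X.
Proof. by rewrite /pimg -imset_comp; apply: eq_imset => x; rewrite /= permM. Qed.

Lemma card_pimg (s : {perm V}) X : #|pimg s X| = #|X|.
Proof. exact/card_imset/perm_inj. Qed.

Lemma mem_pimg (s : {perm V}) X x : (x \in pimg s X) = (s^-1 x \in X).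
Proof. by rewrite -{1}(permKV s x) /pimg mem_imset //; apply: perm_inj. Qed.

Lemma card_family_sum1 (I : finType) (f : I -> {perm V}) u :
  (forall v, \sum_(p : I) (f p u == v) = 1)%N -> #|I| = #|V|.
Proof.
move=> fS; rewrite -sum1_card -[RHS]sum1_card -(eq_bigr _ (fun v _ => fS v)).
rewrite exchange_big /=; apply: eq_bigr => p _.
by rewrite (bigD1 (f p u)) //= eqxx big1 // => v /negbTE; rewrite eq_sym => ->.
Qed.

(* Any family of elements of G whose matrices sum to J_n can be reindexed by
   'I_n: its size is forced to be n by counting the entries of a row. *)
Lemma uniformly_transitive_family (G : {set {perm V}}) (I : finType)
    (f : I -> {perm V}) :
  (forall p, f p \in G) -> (forall u v, \sum_(p : I) (f p u == v) = 1)%N ->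
  uniformly_transitive G.
Proof.
move=> fG fS; have [u0 _ | V0] := pickP (fun _ : V => true); last first.
  have cardV0 : #|V| = 0%N by apply: eq_card0 => x; have := V0 x.
  have noI (i : 'I_#|V|) : False by case: i; rewrite cardV0.
  exists (fun _ => 1); split=> [i | i | u]; [by case: (noI i) | by case: (noI i) |].
  by have := V0 u.
have cardI := card_family_sum1 (fS u0).
pose h (i : 'I_#|V|) := enum_val (cast_ord (esym cardI) i).
have h_bij : bijective h.
  exists (fun p => cast_ord cardI (enum_rank p)) => i; rewrite /h.
    by rewrite enum_valK cast_ordKV.
  by rewrite cast_ordK enum_rankK.
have hS u v : (\sum_(i < #|V|) (f (h i) u == v) = 1)%N.
  rewrite -(fS u v) (reindex h) //.
  by case: h_bij => h' hK h'K; exists h' => x _; [rewrite hK | rewrite h'K].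
exists (fun i => f (h i)); split => // i j Eij; apply/eqP/negPn/negP => nij.
have := hS u0 (f (h i) u0).
by rewrite (bigD1 i) //= (bigD1 j) 1?eq_sym //= Eij eqxx.
Qed.

End Permutations.

Section BlockSystem.
Variables (V : finType) (G : {group {perm V}}) (B : {set V}).
Hypothesis blockB : is_block G B.
Let P := block_system G B.

Lemma block_system_eq C D x : C \in P -> D \in P -> x \in C -> x \in D -> C = D.
Proof.
move=> /imsetP [g gG ->] /imsetP [h hG ->]; rewrite !mem_pimg => gx hx.
have hgG : h * g^-1 \in G by rewrite groupM ?groupV.
have /orP [/eqP hgB | hgB_dis] := forall_inP blockB _ hgG.
  by rewrite -{1}hgB pimgM -mulgA mulVg mulg1.
have : (h * g^-1) (h^-1 x) \in pimg (h * g^-1) B by apply: imset_f.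
by rewrite (disjointFl hgB_dis) // permM permKV.
Qed.

Lemma mem_block_system_eq C D v : C \in P -> D \in P -> v \in D -> (v \in C) = (C == D).
Proof.
move=> CP DP vD; apply/idP/eqP => [vC | ->] //.
exact: block_system_eq CP DP vC vD.
Qed.

Lemma pimg_block_system g C : g \in G -> C \in P -> pimg g C \in P.
Proof. by move=> gG /imsetP [h hG ->]; rewrite pimgM; apply/imset_f/groupM. Qed.

Lemma card_block_system C : C \in P -> #|C| = #|B|.
Proof. by move=> /imsetP [h hG ->]; rewrite card_pimg. Qed.

Lemma block_system_cover b u : transitive_on G -> b \in B ->
  exists2 C, C \in P & u \in C.
Proof.
move=> trG bB; have [h hG <-] := trG b u.
by exists (pimg h B); apply: imset_f.
Qed.

Lemma fixer_stable t C u : t \in fixer G P -> C \in P -> u \in C -> t u \in C.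
Proof.
rewrite inE => /andP [_ /forall_inP tC] CP uC.
by rewrite -(eqP (tC C CP)); apply: imset_f.
Qed.

(* Schur orthogonality makes j |-> tau j u injective; with #|C| = k values in
   C, every point of C is hit exactly once. *)
Lemma schur_orth_fixer_count (tau : 'I_#|B| -> {perm V}) C u w :
  (forall j, tau j \in fixer G P) ->
  (forall i j, i != j -> schur_orth (tau i) (tau j)) ->
  C \in P -> u \in C -> (\sum_j (tau j u == w) = (w \in C))%N.
Proof.
move=> tauF tauO CP uC.
have tau_inj : injective (fun j => tau j u).
  move=> i j /= Eij; apply/eqP/negPn/negP => nij.
  by have := tauO _ _ nij u (tau i u); rewrite Eij eqxx.
have orbitC : [set tau j u | j : 'I_#|B|] = C.
  apply/eqP; rewrite eqEcard card_imset // card_ord (card_block_system CP) leqnn.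
  by rewrite andbT; apply/subsetP => _ /imsetP [j _ ->]; apply: fixer_stable.
case: (boolP (w \in C)) => [wC | wNC]; last first.
  by rewrite big1 // => j _; case: eqP => // Ew; rewrite -Ew fixer_stable in wNC.
move: wC; rewrite -orbitC => /imsetP [j0 _ ->].
rewrite (bigD1 j0) //= eqxx big1 // => j nj0.
by apply/eqP; rewrite eqb0; apply: contra nj0 => /eqP /tau_inj ->.
Qed.

Lemma uniformly_transitive_of_factorization b (tau : 'I_#|B| -> {perm V})
    (g : 'I_#|P| -> {perm V}) :
  transitive_on G -> b \in B ->
  (forall j, tau j \in fixer G P) ->
  (forall i j, i != j -> schur_orth (tau i) (tau j)) ->
  (forall i, g i \in G) ->
  (forall C D, C \in P -> D \in P -> \sum_i (pimg (g i) C == D) = 1)%N ->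
  uniformly_transitive G.
Proof.
move=> trG bB tauF tauO gG gS.
apply: (@uniformly_transitive_family _ _ _ (fun p => tau p.2 * g p.1)).
  by move=> p; rewrite groupM //; have := tauF p.2; rewrite inE => /andP [].
move=> u v; have [C CP uC] := block_system_cover u trG bB.
have [D DP vD] := block_system_cover v trG bB.
rewrite -(gS C D CP DP).
transitivity (\sum_i \sum_j ((tau j * g i)%g u == v : nat)); first by rewrite pair_bigA.
apply: eq_bigr => i _.
under eq_bigr do rewrite permM -(inj_eq (@perm_inj _ (g i)^-1)) permK.
rewrite (schur_orth_fixer_count _ tauF tauO CP uC) -mem_pimg.
by rewrite (mem_block_system_eq (pimg_block_system (gG i) CP) DP vD).
Qed.

End BlockSystem.

Theorem mainTheorem9 (V : finType) (e : rel V) :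
  symmetric e -> irreflexive e ->
  transitive_on (graphAut e) -> imprimitive (graphAut e) ->
  (exists B : {set V}, factorizing e B) ->
  uniformly_vertex_transitive e.
Proof.
move=> _ _ trG _ [B [blockB /andP [/ltnW /card_gt0P [b bB] _]]].
move=> [tau [_ tauF tauO]] [g [gG _ gS]].
exact: (@uniformly_transitive_of_factorization _ (graphAut_group e) B blockB b tau g).
Qed.
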